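(* Let $S_m$ be the model sphere of revolution and let $f\colon(-1,1)\to\mathbb{R}$ be the rotation function of the first return map to the Birkhoff annulus $A$ of the minimal parallel, as described in the context. Then $f$ is strictly decreasing on $(-1,1)$.
   Context: A sphere of revolution $S\subset\mathbb{R}^3$ is a surface diffeomorphic to $S^2$ invariant under rotations about the $z$-axis. Its intersection with the $(x,z)$-half-plane is parametrized by arclength by a closed curve $\sigma(s)=(r(s),z(s))$, $s\in\mathbb{R}/M\mathbb{Z}$ ($M$ its length), positively oriented, with $\sigma(0)$ the lower intersection point with the $z$-axis. Coordinates $\Phi(s,\theta)=(r(s)\cos\theta,r(s)\sin\theta,z(s))$, $s\in(0,M/2)$, $\theta\in\mathbb{R}/2\pi\mathbb{Z}$; the induced metric is $ds^2+r(s)^2d\theta^2$. The parallel $P_{s_0}$ is the curve $\theta\mapsto\Phi(s_0,\theta)$. The model sphere $S_m$ is a sphere of revolution with: $M>2\pi$; $r(s)=\sin s$ for $s\in[0,\pi/2]$; $\sigma$ symmetric with respect to the $x$-axis (so $S_m$ is symmetric under $z\mapsto -z$); and $r|_{(0,M/2)}$ has exactly three critical points: maxima at $s=\pi/2$ and $s=M/2-\pi/2$ with value $1$, and a minimum at $s=M/4$ with value $r_{min}\in(0,1)$. Unit tangent vectors over $\Phi(s,\theta)$ are described by the angle $\beta\in\mathbb{R}/2\pi\mathbb{Z}$ from $\partial_\theta$ to the vector; in coordinates $(s,\theta,\beta)$ the geodesic flow is $s'=\sin\beta$, $\beta'=\frac{r'(s)}{r(s)}\cos\beta$, $\theta'=\frac{\cos\beta}{r(s)}$.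 The Birkhoff annulus of $P_{M/4}$ is $A=\{(\Phi(M/4,\theta),\beta):\theta\in\mathbb{R}/2\pi\mathbb{Z},\ \beta\in(0,\pi)\}$, parametrized by $(x,\eta)$ with $x\in\mathbb{R}/L\mathbb{Z}$ the arclength along $P_{M/4}$ ($L=2\pi r_{min}$) and $\eta=-\cos\beta\in(-1,1)$. Every geodesic flow line through $A$ is transverse to $A$ and returns to $A$; by invariance of the Clairaut integral $r(s)\cos\beta$ and rotational symmetry, the first return map has the form $\rho(x,\eta)=(x+f(\eta)\bmod L,\ \eta)$, where $f\colon(-1,1)\to\mathbb{R}$ is the continuous function with $f(0)=0$ (the points $(x,0)$ lie on meridians, which are closed geodesics). *)

From Stdlib Require Import Reals Lra.
From Coquelicot Require Import Coquelicot.
Open Scope R_scope.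

Definition smooth (f : R -> R) : Prop := forall (n : nat) (x : R), ex_derive_n f n x.

(* The meridian curve sigma(s) = (r s, z s), s in R/MZ, parametrized by
   arclength, of a sphere of revolution S (the full intersection of S with the
   (x,z)-plane; the half s in (0,M/2) lies in the half-plane x > 0).
   sigma(0) is the lower intersection point with the z-axis, sigma(M/2) the
   upper one; positively oriented means that sigma first goes into x > 0. *)
Definition sphere_of_revolution (M : R) (r z : R -> R) : Prop :=
  0 < M /\ smooth r /\ smooth z /\
  (forall s, r (s + M) = r s /\ z (s + M) = z s) /\
  (forall s, (Derive r s) ^ 2 + (Derive z s) ^ 2 = 1) /\
  (* rotation invariance: sigma is symmetric w.r.t. the z-axis *)
  (forall s, r (- s) = - r s /\ z (- s) = z s) /\
  (forall s1 s2, 0 <= s1 < M -> 0 <= s2 < M -> r s1 = r s2 -> z s1 = z s2 -> s1 = s2) /\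
  r 0 = 0 /\ r (M / 2) = 0 /\ z 0 < z (M / 2) /\
  (forall s, 0 < s < M / 2 -> 0 < r s).

Definition model_sphere (M : R) (r z : R -> R) : Prop :=
  sphere_of_revolution M r z /\
  2 * PI < M /\
  (forall s, 0 <= s <= PI / 2 -> r s = sin s) /\
  (* symmetry of sigma with respect to the x-axis (z |-> -z) *)
  (forall s, r (M / 2 - s) = r s /\ z (M / 2 - s) = - z s) /\
  (forall s, 0 < s < M / 2 ->
     (Derive r s = 0 <-> (s = PI / 2 \/ s = M / 2 - PI / 2 \/ s = M / 4))) /\
  r (PI / 2) = 1 /\ r (M / 2 - PI / 2) = 1 /\
  0 < r (M / 4) < 1 /\
  (forall s, 0 < s < M / 2 -> r (M / 4) <= r s <= 1).

Definition geodesic_solution (r : R -> R) (S Th B : R -> R) : Prop :=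
  forall t,
    is_derive S t (sin (B t)) /\
    is_derive B t (Derive r (S t) / r (S t) * cos (B t)) /\
    is_derive Th t (cos (B t) / r (S t)).

(* T is the first return time to the Birkhoff annulus A of P_{M/4}:
   s = M/4 and beta in (0,pi) mod 2pi, i.e. sin beta > 0. *)
Definition first_return (M : R) (S B : R -> R) (T : R) : Prop :=
  0 < T /\ S T = M / 4 /\ 0 < sin (B T) /\
  (forall t, 0 < t < T -> ~ (S t = M / 4 /\ 0 < sin (B t))).

(* f : (-1,1) -> R is the rotation function of the first return map
   rho(x, eta) = (x + f(eta) mod L, eta) on A, where x = r_min * theta is the
   arclength along P_{M/4}, L = 2 pi r_min, eta = - cos beta; f is the
   continuous lift with f(0) = 0.  For eta <> 0 the geodesic avoids the poles,
   so the return map is computed in the coordinates (s, theta, beta). *)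
Definition rotation_function (M : R) (r f : R -> R) : Prop :=
  (forall x, -1 < x < 1 -> continuous f x) /\
  f 0 = 0 /\
  forall eta, -1 < eta < 1 -> eta <> 0 ->
  forall S Th B : R -> R,
    geodesic_solution r S Th B ->
    S 0 = M / 4 -> 0 < sin (B 0) -> - cos (B 0) = eta ->
    forall T, first_return M S B T ->
    exists k : Z,
      r (M / 4) * (Th T - Th 0) = f eta + IZR k * (2 * PI * r (M / 4)).

(* Write [N(c) = ∫_{PI/2}^{M/2-PI/2} c / (r sqrt (r^2 - c^2)) ds] for [0 <= |c| < r_min].
   By Clairaut's relation [r cos β = c] the geodesic leaving [P_{M/4}] with [η = -c / r_min < 0]
   is explicit: it climbs the neck, where [t] is the inverse of [∫ r / sqrt (r^2 - c^2) ds],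
   turns around along a great circle of the round upper cap, descends the neck and turns in the
   lower cap.  Gluing the four arcs and extending periodically gives a global solution whose
   first return to [A] is after one loop, with [Δθ = 2 PI + 2 N(c)] (each cap contributes [PI]);
   the reflection [β ↦ PI - β] handles [η > 0].  Hence [f(η) = 2 r_min N(- r_min η)] modulo
   [L = 2 PI r_min]; both sides are continuous and agree at [0], so they are equal, and [N] is
   strictly increasing because [c / sqrt (r^2 - c^2)] is. *)

From Stdlib Require Import Reals Lra Lia ClassicalEpsilon.
From Coquelicot Require Import Coquelicot.
Open Scope R_scope.

Lemma is_derive_comp_sub (W : R -> R) (s t d : R) :
  is_derive W (t - s) d -> is_derive (fun x => W (x - s)) t d.
Proof.
  intros HW.
  assert (Hs : is_derive (fun x : R => x - s) t 1) by (auto_derive; auto; ring).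
  pose proof (is_derive_comp W (fun x => x - s) t d 1 HW Hs) as H.
  now rewrite <- (Rmult_1_l d).
Qed.

Lemma is_derive_comp_reflect (W : R -> R) (K t d : R) :
  is_derive W (K - t) d -> is_derive (fun x => W (K - x)) t (- d).
Proof.
  intros HW.
  assert (HK : is_derive (fun x : R => K - x) t (-1)) by (auto_derive; auto; ring).
  pose proof (is_derive_comp W (fun x => K - x) t d (-1) HW HK) as H.
  now replace (- d) with (-1 * d) by ring.
Qed.

Lemma is_derive_plus_const (W : R -> R) (C t d : R) :
  is_derive W t d -> is_derive (fun x => W x + C) t d.
Proof.
  intros HW. rewrite <- (Rplus_0_r d).
  apply (is_derive_plus W (fun _ => C)); [exact HW |].
  exact (is_derive_const (V := R_NormedModule) C t).
Qed.

Lemma is_derive_const_plus (W : R -> R) (C t d : R) :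
  is_derive W t d -> is_derive (fun x => C + W x) t d.
Proof.
  intros HW. rewrite <- (Rplus_0_l d).
  apply (is_derive_plus (fun _ => C) W); [| exact HW].
  exact (is_derive_const (V := R_NormedModule) C t).
Qed.

Lemma is_derive_const_minus (W : R -> R) (C t d : R) :
  is_derive W t d -> is_derive (fun x => C - W x) t (- d).
Proof.
  intros HW. rewrite <- (Rminus_0_l d).
  apply (is_derive_minus (fun _ => C) W); [| exact HW].
  exact (is_derive_const (V := R_NormedModule) C t).
Qed.

Lemma is_derive_glue_at (f g h : R -> R) (t0 d l : R) :
  0 < d ->
  (forall t, t0 - d < t <= t0 -> f t = g t) ->
  (forall t, t0 <= t < t0 + d -> f t = h t) ->
  is_derive g t0 l -> is_derive h t0 l -> is_derive f t0 l.
Proof.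
  intros Hd Hg Hh Dg Dh.
  apply is_derive_Reals in Dg, Dh. apply is_derive_Reals.
  intros eps Heps.
  destruct (Dg eps Heps) as [d1 Hd1], (Dh eps Heps) as [d2 Hd2].
  assert (Hm : 0 < Rmin d (Rmin d1 d2)).
  { destruct d1, d2; simpl. repeat apply Rmin_pos; lra. }
  exists (mkposreal _ Hm). intros e He Hae. simpl in Hae.
  pose proof (Rmin_l d (Rmin d1 d2)). pose proof (Rmin_r d (Rmin d1 d2)).
  pose proof (Rmin_l d1 d2). pose proof (Rmin_r d1 d2).
  assert (Ha : Rabs e < d) by lra. apply Rabs_def2 in Ha.
  destruct (Rlt_le_dec e 0).
  - rewrite (Hg (t0 + e)), (Hg t0) by lra. apply Hd1; auto; lra.
  - rewrite (Hh (t0 + e)), (Hh t0) by lra. apply Hd2; auto; lra.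
Qed.

Definition glue (b : R) (f g : R -> R) (u : R) : R :=
  if Rle_dec u b then f u else g u.

Lemma glue_left (b : R) (f g : R -> R) (u : R) : u <= b -> glue b f g u = f u.
Proof. intros H. unfold glue. destruct Rle_dec; lra. Qed.

Lemma glue_right (b : R) (f g : R -> R) (u : R) : b < u -> glue b f g u = g u.
Proof. intros H. unfold glue. destruct Rle_dec; lra. Qed.

Lemma is_derive_glue (a b c : R) (f g df dg : R -> R) :
  (forall u, a <= u <= b -> is_derive f u (df u)) ->
  (forall u, b <= u <= c -> is_derive g u (dg u)) ->
  f b = g b -> df b = dg b ->
  forall u, a <= u <= c -> is_derive (glue b f g) u (glue b df dg u).
Proof.
  intros Hf Hg Efg Edfg u Hu.
  destruct (Rtotal_order u b) as [Lt | [Eq | Gt]].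
  - rewrite glue_left by lra.
    apply (is_derive_ext_loc f); [|apply Hf; lra].
    apply (locally_interval _ u m_infty b); simpl; auto.
    intros y _ Hy. rewrite glue_left; lra.
  - subst u. rewrite glue_left by lra.
    apply (is_derive_glue_at _ f g b 1); try lra.
    + intros t Ht. apply glue_left; lra.
    + intros t Ht. destruct (Req_dec t b) as [->|].
      * rewrite glue_left; lra.
      * apply glue_right; lra.
    + apply Hf; lra.
    + rewrite Edfg. apply Hg; lra.
  - rewrite glue_right by lra.
    apply (is_derive_ext_loc g); [|apply Hg; lra].
    apply (locally_interval _ u b p_infty); simpl; auto.
    intros y Hy _. rewrite glue_right; lra.
Qed.

Section PeriodicExtension.

Variables (a b D : R) (X DX : R -> R).
Hypothesis Hab : a < b.
Hypothesis HX : forall u, a <= u <= b -> is_derive X u (DX u).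
Hypothesis HX_period : X b = X a + D.
Hypothesis HDX_period : DX b = DX a.

Definition period_index (t : R) : Z := Int_part ((t - a) / (b - a)).
Definition period_reduce (t : R) : R := t - IZR (period_index t) * (b - a).
Definition periodic_extension (t : R) : R :=
  X (period_reduce t) + IZR (period_index t) * D.

Lemma period_index_unique (t : R) (k : Z) :
  a <= t - IZR k * (b - a) < b -> period_index t = k.
Proof.
  intros H. unfold period_index. symmetry. apply Int_part_spec.
  assert (E : (t - a) / (b - a) = IZR k + (t - IZR k * (b - a) - a) / (b - a))
    by (field; lra).
  rewrite E. split.
  - enough ((t - IZR k * (b - a) - a) / (b - a) < 1) by lra.
    apply Rmult_lt_reg_r with (b - a); [lra |].
    unfold Rdiv. rewrite Rmult_assoc, Rinv_l; lra.
  - enough (0 <= (t - IZR k * (b - a) - a) / (b - a)) by lra.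
    apply Rdiv_le_0_compat; lra.
Qed.

Lemma period_reduce_range (t : R) : a <= period_reduce t < b.
Proof.
  unfold period_reduce, period_index.
  destruct (base_Int_part ((t - a) / (b - a))) as [H1 H2].
  set (k := Int_part _) in *.
  assert (E : t - IZR k * (b - a) = a + ((t - a) / (b - a) - IZR k) * (b - a))
    by (field; lra).
  rewrite E. split.
  - enough (0 <= ((t - a) / (b - a) - IZR k) * (b - a)) by lra.
    apply Rmult_le_pos; lra.
  - enough (((t - a) / (b - a) - IZR k) * (b - a) < 1 * (b - a)) by lra.
    apply Rmult_lt_compat_r; lra.
Qed.

Lemma periodic_extension_eq (t : R) (k : Z) :
  a <= t - IZR k * (b - a) <= b ->
  periodic_extension t = X (t - IZR k * (b - a)) + IZR k * D.
Proof.
  intros H. unfold periodic_extension, period_reduce.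
  destruct (Req_dec (t - IZR k * (b - a)) b) as [Eb | Nb].
  - rewrite (period_index_unique t (k + 1)) by (rewrite plus_IZR; lra).
    rewrite plus_IZR, Eb, HX_period.
    replace (t - (IZR k + 1) * (b - a)) with a by lra. ring.
  - rewrite (period_index_unique t k) by lra. reflexivity.
Qed.

Lemma is_derive_period_shift (t : R) (k : Z) :
  a <= t - IZR k * (b - a) <= b ->
  is_derive (fun x => X (x - IZR k * (b - a)) + IZR k * D) t (DX (t - IZR k * (b - a))).
Proof.
  intros H. apply is_derive_plus_const, is_derive_comp_sub, HX; lra.
Qed.

Lemma is_derive_periodic_extension (t : R) :
  is_derive periodic_extension t (DX (period_reduce t)).
Proof.
  pose proof (period_reduce_range t) as Hu.
  unfold period_reduce in *. set (k := period_index t) in *.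
  destruct (Req_dec (t - IZR k * (b - a)) a) as [Ea | Na].
  - (* at a junction the extension is the copy of period [k - 1] on the left *)
    apply (is_derive_glue_at _ (fun x => X (x - IZR (k - 1) * (b - a)) + IZR (k - 1) * D)
             (fun x => X (x - IZR k * (b - a)) + IZR k * D) t (b - a)); try lra.
    + intros x Hx. apply periodic_extension_eq. rewrite minus_IZR. lra.
    + intros x Hx. apply periodic_extension_eq. lra.
    + rewrite Ea, <- HDX_period.
      replace (DX b) with (DX (t - IZR (k - 1) * (b - a))) by (f_equal; rewrite minus_IZR; lra).
      apply is_derive_period_shift. rewrite minus_IZR. lra.
    + apply is_derive_period_shift. lra.
  - apply (is_derive_ext_loc (fun x => X (x - IZR k * (b - a)) + IZR k * D)).
    + apply (locally_interval _ t (t - (t - IZR k * (b - a) - a))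
               (t + (b - (t - IZR k * (b - a))))); simpl; try lra.
      intros y Hy1 Hy2. symmetry. apply periodic_extension_eq. lra.
    + apply is_derive_period_shift. lra.
Qed.

End PeriodicExtension.

Lemma IVT_closed (g : R -> R) (lo hi y : R) :
  lo <= hi -> (forall z, lo <= z <= hi -> continuity_pt g z) ->
  Rmin (g lo) (g hi) <= y <= Rmax (g lo) (g hi) -> exists z, lo <= z <= hi /\ g z = y.
Proof.
  intros Hle Hc.
  assert (Hincr : forall (h : R -> R) (y' : R), (forall z, lo <= z <= hi -> continuity_pt h z) ->
            h lo <= y' <= h hi -> exists z, lo <= z <= hi /\ h z = y').
  { intros h y' Hh Hy.
    destruct (Req_dec y' (h lo)) as [-> | N1]; [exists lo; split; [lra | auto] |].
    destruct (Req_dec lo hi) as [<- | Nlh]; [lra |].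
    destruct (Req_dec y' (h hi)) as [-> | N2]; [exists hi; split; [lra | auto] |].
    destruct (Ranalysis5.IVT_interv (fun z => h z - y') lo hi) as [z [Hz Ez]]; try lra.
    - intros x Hx. apply continuity_pt_minus; [auto | apply continuity_pt_const; now intros ? ?].
    - exists z. split; [auto | lra]. }
  intros Hy. destruct (Rle_dec (g lo) (g hi)).
  - apply Hincr; auto. rewrite Rmin_left, Rmax_right in Hy; lra.
  - destruct (Hincr (fun z => - g z) (- y)) as [z [Hz Ez]].
    + intros z Hz. apply continuity_pt_opp; auto.
    + rewrite Rmin_right, Rmax_left in Hy; lra.
    + exists z. split; [auto | lra].
Qed.

Lemma integer_valued_continuous_const (g : R -> R) (lo hi : R) :
  lo <= hi -> (forall z, lo <= z <= hi -> continuity_pt g z) ->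
  (forall z, lo <= z <= hi -> exists k : Z, g z = IZR k) -> g lo = g hi.
Proof.
  intros Hle Hc Hi.
  destruct (Hi lo) as [k1 E1]; [lra |]. destruct (Hi hi) as [k2 E2]; [lra |].
  (* otherwise [g] takes a half-integer value between [g lo] and [g hi] *)
  assert (Hhalf : forall k k' : Z, IZR k <> IZR k' + 1 / 2).
  { intros k k' E.
    assert (E2k : IZR (2 * k) = IZR (2 * k' + 1))
      by (rewrite plus_IZR, !mult_IZR; simpl; lra).
    apply eq_IZR in E2k. lia. }
  rewrite E1, E2. f_equal.
  destruct (Z.lt_total k1 k2) as [L | [Q | G]]; [exfalso | exact Q | exfalso].
  - assert (IZR k1 + 1 <= IZR k2) by (rewrite <- plus_IZR; apply IZR_le; lia).
    destruct (IVT_closed g lo hi (IZR k1 + 1 / 2)) as [z [Hz Ez]]; auto.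
    { rewrite E1, E2, Rmin_left, Rmax_right; lra. }
    destruct (Hi z Hz) as [k Ek]. apply (Hhalf k k1). lra.
  - assert (IZR k2 + 1 <= IZR k1) by (rewrite <- plus_IZR; apply IZR_le; lia).
    destruct (IVT_closed g lo hi (IZR k2 + 1 / 2)) as [z [Hz Ez]]; auto.
    { rewrite E1, E2, Rmin_right, Rmax_left; lra. }
    destruct (Hi z Hz) as [k Ek]. apply (Hhalf k k2). lra.
Qed.

(* [auto_derive] writes [x ^ 2] as [x * (x * 1)] and [a - b] as [a + - b]. *)
Ltac fold_squares :=
  repeat match goal with |- context [?a * (?a * 1)] => replace (a * (a * 1)) with (a ^ 2) by ring end;
  repeat match goal with |- context [?a + - ?b] => change (a + - b) with (a - b) end.

Lemma sqrt_eq_of_sq (A B : R) : 0 <= B -> A = B ^ 2 -> sqrt A = B.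
Proof. intros H ->. rewrite <- Rsqr_pow2. apply sqrt_Rsqr; auto. Qed.

Lemma sin2_cos2_pow (t : R) : sin t ^ 2 + cos t ^ 2 = 1.
Proof. rewrite <- !Rsqr_pow2. apply sin2_cos2. Qed.

(* The great circle of the unit sphere with Clairaut constant [c], parametrised by arclength
   so that it crosses the equator [s = PI/2] at [t = - PI/2] and [t = PI/2] and touches the
   parallel [sin s = c] at [t = 0]; [cap_cos t] and [cap_sin t] are [cos s] and [sin s]. *)
Section GreatCircle.

Variable c : R.
Hypothesis Hc : 0 < c < 1.

Definition cap_k : R := sqrt (1 - c ^ 2).
Definition cap_cos (t : R) : R := cap_k * cos t.
Definition cap_sin (t : R) : R := sqrt (1 - cap_cos t ^ 2).
Definition cap_s (t : R) : R := PI / 2 - atan (cap_cos t / cap_sin t).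
Definition cap_beta (t : R) : R := atan (cap_k * sin t / c).
Definition cap_theta (t : R) : R :=
  t + atan ((1 - c) * sin t * cos t / (c * cos t ^ 2 + sin t ^ 2)).

Lemma cap_k_spec : 0 < cap_k < 1 /\ cap_k ^ 2 = 1 - c ^ 2.
Proof.
  unfold cap_k. assert (0 < 1 - c ^ 2) by nra.
  split; [split |].
  - apply sqrt_lt_R0; auto.
  - apply Rlt_le_trans with (sqrt 1); [apply sqrt_lt_1; nra | rewrite sqrt_1; lra].
  - rewrite pow2_sqrt; lra.
Qed.

Lemma cap_sin_spec (t : R) : 0 < cap_sin t /\ cap_sin t ^ 2 = 1 - cap_cos t ^ 2.
Proof.
  destruct cap_k_spec as [[Hk1 Hk2] Hk].
  assert (cos t ^ 2 <= 1) by (pose proof (sin2_cos2_pow t); pose proof (pow2_ge_0 (sin t)); lra).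
  assert (0 < 1 - cap_cos t ^ 2) by (unfold cap_cos; nra).
  unfold cap_sin. split; [apply sqrt_lt_R0 | rewrite pow2_sqrt]; lra.
Qed.

Lemma sqrt_1_plus_cap_s (t : R) : sqrt (1 + (cap_cos t / cap_sin t)²) = / cap_sin t.
Proof.
  destruct (cap_sin_spec t) as [H1 H2].
  apply sqrt_eq_of_sq; [apply Rlt_le, Rinv_0_lt_compat; auto |].
  unfold Rsqr. field_simplify_eq; [nra | lra].
Qed.

Lemma sin_cap_s (t : R) : sin (cap_s t) = cap_sin t.
Proof.
  destruct (cap_sin_spec t) as [H1 H2].
  unfold cap_s. rewrite sin_minus, sin_PI2, cos_PI2, cos_atan, sqrt_1_plus_cap_s. field. lra.
Qed.

Lemma cos_cap_s (t : R) : cos (cap_s t) = cap_cos t.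
Proof.
  destruct (cap_sin_spec t) as [H1 H2].
  unfold cap_s. rewrite cos_minus, sin_PI2, cos_PI2, sin_atan, sqrt_1_plus_cap_s. field. lra.
Qed.

Lemma sqrt_1_plus_cap_beta (t : R) : sqrt (1 + (cap_k * sin t / c)²) = cap_sin t / c.
Proof.
  destruct (cap_sin_spec t) as [H1 H2], cap_k_spec as [_ Hk].
  pose proof (sin2_cos2_pow t).
  apply sqrt_eq_of_sq; [apply Rlt_le, Rdiv_lt_0_compat; lra |].
  unfold Rsqr, cap_cos in *. field_simplify_eq; [nra | lra].
Qed.

Lemma sin_cap_beta (t : R) : sin (cap_beta t) = cap_k * sin t / cap_sin t.
Proof.
  destruct (cap_sin_spec t) as [H1 H2].
  unfold cap_beta. rewrite sin_atan, sqrt_1_plus_cap_beta. field. lra.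
Qed.

Lemma cos_cap_beta (t : R) : cos (cap_beta t) = c / cap_sin t.
Proof.
  destruct (cap_sin_spec t) as [H1 H2].
  unfold cap_beta. rewrite cos_atan, sqrt_1_plus_cap_beta. field. lra.
Qed.

Lemma is_derive_cap_s (t : R) : is_derive cap_s t (sin (cap_beta t)).
Proof.
  rewrite sin_cap_beta.
  destruct (cap_sin_spec t) as [H1 H2], cap_k_spec as [[Hk1 Hk2] Hk].
  pose proof (sin2_cos2_pow t).
  assert (0 < 1 - cap_cos t ^ 2) by nra.
  unfold cap_s, cap_sin, cap_cos in *. auto_derive.
  - fold_squares. repeat split; lra.
  - fold_squares. set (y := sqrt (1 - (cap_k * cos t) ^ 2)) in *.
    field_simplify_eq; [nra | split; nra].
Qed.

Lemma is_derive_cap_beta (t : R) :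
  is_derive cap_beta t (cap_cos t / cap_sin t * cos (cap_beta t)).
Proof.
  rewrite cos_cap_beta.
  destruct (cap_sin_spec t) as [H1 H2], cap_k_spec as [[Hk1 Hk2] Hk].
  pose proof (sin2_cos2_pow t).
  unfold cap_beta, cap_sin, cap_cos in *. auto_derive; [lra |].
  fold_squares. set (y := sqrt (1 - (cap_k * cos t) ^ 2)) in *.
  field_simplify_eq; [| repeat split; nra].
  rewrite H2. replace (sin t ^ 2) with (1 - cos t ^ 2) by lra.
  replace (c ^ 3) with (c * c ^ 2) by ring. replace (c ^ 2) with (1 - cap_k ^ 2) by lra.
  ring.
Qed.

Lemma is_derive_cap_theta (t : R) : is_derive cap_theta t (cos (cap_beta t) / cap_sin t).
Proof.
  rewrite cos_cap_beta.
  destruct (cap_sin_spec t) as [H1 H2], cap_k_spec as [[Hk1 Hk2] Hk].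
  pose proof (sin2_cos2_pow t).
  assert (Hd : 0 < c * cos t ^ 2 + sin t ^ 2).
  { destruct (Req_dec (sin t) 0) as [E | N].
    - rewrite E in *. nra.
    - pose proof (pow2_gt_0 _ N). pose proof (pow2_ge_0 (cos t)). nra. }
  unfold cap_theta, cap_sin, cap_cos in *. auto_derive.
  - fold_squares. repeat split; lra.
  - fold_squares. set (y := sqrt (1 - (cap_k * cos t) ^ 2)) in *.
    field_simplify_eq; [| repeat split; nra].
    transitivity (c * y ^ 2 * (sin t ^ 2 + cos t ^ 2) ^ 2); [ring |].
    transitivity ((c ^ 3 * cos t ^ 2 + c * sin t ^ 2) * (sin t ^ 2 + cos t ^ 2)); [| ring].
    rewrite H, H2. replace (c ^ 3) with (c * c ^ 2) by ring.
    replace (c ^ 2) with (1 - cap_k ^ 2) by lra. replace (sin t ^ 2) with (1 - cos t ^ 2) by lra.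
    ring.
Qed.

Lemma cap_s_range (t : R) : 0 <= cos t -> 0 < cap_s t <= PI / 2.
Proof.
  intros Hcos. destruct (cap_sin_spec t) as [H1 H2], cap_k_spec as [[Hk1 Hk2] Hk].
  pose proof (atan_bound (cap_cos t / cap_sin t)) as [A1 A2].
  assert (0 <= atan (cap_cos t / cap_sin t)).
  { assert (Hq : 0 <= cap_cos t / cap_sin t)
      by (unfold cap_cos; apply Rle_mult_inv_pos; nra).
    destruct Hq as [Hq | <-]; [| rewrite atan_0; lra].
    rewrite <- atan_0. apply Rlt_le, atan_increasing, Hq. }
  unfold cap_s. lra.
Qed.

Lemma cap_s_PI2 : cap_s (PI / 2) = PI / 2.
Proof. unfold cap_s, cap_cos. rewrite cos_PI2. unfold Rdiv. rewrite !Rmult_0_r, Rmult_0_l, atan_0. ring. Qed.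

Lemma cap_s_mPI2 : cap_s (- (PI / 2)) = PI / 2.
Proof.
  unfold cap_s, cap_cos. rewrite cos_neg, cos_PI2. unfold Rdiv.
  rewrite !Rmult_0_r, Rmult_0_l, atan_0. ring.
Qed.

Lemma cap_theta_PI2 : cap_theta (PI / 2) = PI / 2.
Proof. unfold cap_theta. rewrite cos_PI2. unfold Rdiv. rewrite !Rmult_0_r, Rmult_0_l, atan_0. ring. Qed.

Lemma cap_theta_mPI2 : cap_theta (- (PI / 2)) = - (PI / 2).
Proof.
  unfold cap_theta. rewrite cos_neg, cos_PI2. unfold Rdiv. rewrite !Rmult_0_r, Rmult_0_l, atan_0. ring.
Qed.

Lemma cap_beta_PI2 : cap_beta (PI / 2) = atan (cap_k / c).
Proof. unfold cap_beta. now rewrite sin_PI2, Rmult_1_r. Qed.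

Lemma cap_beta_mPI2 : cap_beta (- (PI / 2)) = - atan (cap_k / c).
Proof.
  unfold cap_beta. rewrite sin_neg, sin_PI2, <- atan_opp. f_equal. field. lra.
Qed.

End GreatCircle.

Definition geodesic_on (r : R -> R) (a b : R) (S Th B : R -> R) : Prop :=
  forall t, a <= t <= b ->
    is_derive S t (sin (B t)) /\
    is_derive B t (Derive r (S t) / r (S t) * cos (B t)) /\
    is_derive Th t (cos (B t) / r (S t)).

Section GeodesicPieces.

Variable r : R -> R.

Lemma geodesic_on_subinterval (a b a' b' : R) (S Th B : R -> R) :
  a <= a' -> b' <= b -> geodesic_on r a b S Th B -> geodesic_on r a' b' S Th B.
Proof. intros Ha Hb G t Ht. apply G. lra. Qed.

Lemma geodesic_on_shift (a b h C : R) (S Th B : R -> R) :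
  geodesic_on r a b S Th B ->
  geodesic_on r (a + h) (b + h) (fun t => S (t - h)) (fun t => C + Th (t - h)) (fun t => B (t - h)).
Proof.
  intros G t Ht. destruct (G (t - h)) as [DS [DB DTh]]; [lra |].
  split; [| split].
  - exact (is_derive_comp_sub S h t _ DS).
  - exact (is_derive_comp_sub B h t _ DB).
  - exact (is_derive_comp_sub (fun y => C + Th y) h t _ (is_derive_const_plus Th C _ _ DTh)).
Qed.

Lemma geodesic_on_reverse (a b K C : R) (S Th B : R -> R) :
  geodesic_on r a b S Th B ->
  geodesic_on r (K - b) (K - a) (fun t => S (K - t)) (fun t => C - Th (K - t)) (fun t => - B (K - t)).
Proof.
  intros G t Ht. destruct (G (K - t)) as [DS [DB DTh]]; [lra |].
  rewrite sin_neg, cos_neg. split; [| split].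
  - exact (is_derive_comp_reflect S K t _ DS).
  - rewrite <- (Ropp_involutive (_ * _)).
    exact (is_derive_opp (fun x => B (K - x)) t _ (is_derive_comp_reflect B K t _ DB)).
  - rewrite <- (Ropp_involutive (_ / _)).
    exact (is_derive_const_minus (fun x => Th (K - x)) C t _ (is_derive_comp_reflect Th K t _ DTh)).
Qed.

Lemma Derive_reflect (m : R) :
  (forall x, ex_derive r x) -> (forall s, r (m - s) = r s) ->
  forall s, Derive r (m - s) = - Derive r s.
Proof.
  intros Hr Hsym s.
  assert (D : is_derive (fun x : R => r (m - x)) s (- Derive r (m - s)))
    by exact (is_derive_comp_reflect r m s _ (Derive_correct r (m - s) (Hr _))).
  rewrite <- (Derive_ext _ _ s Hsym), (is_derive_unique _ _ _ D). ring.
Qed.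

Lemma geodesic_on_mirror (m a b : R) (S Th B : R -> R) :
  (forall x, ex_derive r x) -> (forall s, r (m - s) = r s) ->
  geodesic_on r a b S Th B ->
  geodesic_on r a b (fun t => m - S t) Th (fun t => - B t).
Proof.
  intros Hr Hsym G t Ht. destruct (G t Ht) as [DS [DB DTh]].
  rewrite sin_neg, cos_neg, (Derive_reflect m Hr Hsym), Hsym. split; [| split]; auto.
  - exact (is_derive_const_minus S m t _ DS).
  - replace (- Derive r (S t) / r (S t) * cos (B t))
      with (- (Derive r (S t) / r (S t) * cos (B t))) by (unfold Rdiv; ring).
    now apply (is_derive_opp B).
Qed.

Lemma geodesic_on_glue (a b c : R) (S1 Th1 B1 S2 Th2 B2 : R -> R) :
  geodesic_on r a b S1 Th1 B1 -> geodesic_on r b c S2 Th2 B2 ->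
  S1 b = S2 b -> Th1 b = Th2 b -> B1 b = B2 b ->
  geodesic_on r a c (glue b S1 S2) (glue b Th1 Th2) (glue b B1 B2).
Proof.
  intros G1 G2 ES ETh EB t Ht.
  pose proof (is_derive_glue a b c S1 S2 (fun u => sin (B1 u)) (fun u => sin (B2 u))
    (fun u Hu => proj1 (G1 u Hu)) (fun u Hu => proj1 (G2 u Hu)) ES
    ltac:(cbv beta; now rewrite EB) t Ht) as DS.
  pose proof (is_derive_glue a b c B1 B2
    (fun u => Derive r (S1 u) / r (S1 u) * cos (B1 u))
    (fun u => Derive r (S2 u) / r (S2 u) * cos (B2 u))
    (fun u Hu => proj1 (proj2 (G1 u Hu))) (fun u Hu => proj1 (proj2 (G2 u Hu))) EB
    ltac:(cbv beta; now rewrite ES, EB) t Ht) as DB.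
  pose proof (is_derive_glue a b c Th1 Th2
    (fun u => cos (B1 u) / r (S1 u)) (fun u => cos (B2 u) / r (S2 u))
    (fun u Hu => proj2 (proj2 (G1 u Hu))) (fun u Hu => proj2 (proj2 (G2 u Hu))) ETh
    ltac:(cbv beta; now rewrite ES, EB) t Ht) as DTh.
  unfold glue in *. destruct (Rle_dec t b); cbv beta in *; auto.
Qed.

Lemma geodesic_solution_periodic (a b D : R) (S Th B : R -> R) :
  a < b -> geodesic_on r a b S Th B -> S b = S a -> B b = B a -> Th b = Th a + D ->
  geodesic_solution r (periodic_extension a b 0 S) (periodic_extension a b D Th)
    (periodic_extension a b 0 B).
Proof.
  intros Hab G ES EB ETh t.
  assert (Ered : forall X, periodic_extension a b 0 X t = X (period_reduce a b t))
    by (intros X; unfold periodic_extension; ring).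
  rewrite !Ered. split; [| split].
  - apply (is_derive_periodic_extension a b 0 S (fun u => sin (B u))); auto.
    + intros u Hu. apply (G u Hu).
    + lra.
    + now rewrite EB.
  - apply (is_derive_periodic_extension a b 0 B (fun u => Derive r (S u) / r (S u) * cos (B u))); auto.
    + intros u Hu. apply (G u Hu).
    + lra.
    + now rewrite EB, ES.
  - apply (is_derive_periodic_extension a b D Th (fun u => cos (B u) / r (S u))); auto.
    + intros u Hu. apply (G u Hu).
    + now rewrite EB, ES.
Qed.

Lemma geodesic_solution_reflect (S Th B : R -> R) :
  geodesic_solution r S Th B -> geodesic_solution r S (fun t => - Th t) (fun t => PI - B t).
Proof.
  intros H t. destruct (H t) as [DS [DB DTh]].
  rewrite sin_PI_x, Rtrigo_facts.cos_pi_minus. split; [exact DS | split].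
  - replace (Derive r (S t) / r (S t) * - cos (B t))
      with (- (Derive r (S t) / r (S t) * cos (B t))) by ring.
    exact (is_derive_const_minus B PI t _ DB).
  - replace (- cos (B t) / r (S t)) with (- (cos (B t) / r (S t))) by (unfold Rdiv; ring).
    now apply (is_derive_opp Th).
Qed.

End GeodesicPieces.

Lemma first_return_reflect (M : R) (S B : R -> R) (T : R) :
  first_return M S B T -> first_return M S (fun t => PI - B t) T.
Proof.
  intros [H1 [H2 [H3 H4]]]. repeat split; auto; rewrite ?sin_PI_x; auto.
  intros t Ht. rewrite sin_PI_x. now apply H4.
Qed.

Definition twist (rho y : R) : R := y / (rho * sqrt (rho ^ 2 - y ^ 2)).
Definition twist_dy (rho y : R) : R := rho / ((rho ^ 2 - y ^ 2) * sqrt (rho ^ 2 - y ^ 2)).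

Lemma is_derive_twist (rho y : R) :
  0 < rho -> y ^ 2 < rho ^ 2 -> is_derive (twist rho) y (twist_dy rho y).
Proof.
  intros H1 H2. assert (H3 : 0 < sqrt (rho ^ 2 - y ^ 2)) by (apply sqrt_lt_R0; lra).
  unfold twist, twist_dy. auto_derive.
  - fold_squares. repeat split; try lra. apply Rgt_not_eq, Rmult_lt_0_compat; lra.
  - fold_squares. set (q := sqrt (rho ^ 2 - y ^ 2)) in *.
    assert (Hq : q ^ 2 = rho ^ 2 - y ^ 2) by (unfold q; rewrite pow2_sqrt; lra).
    field_simplify_eq; [rewrite Hq; ring | repeat split; nra].
Qed.

Lemma twist_dy_pos (rho y : R) : 0 < rho -> y ^ 2 < rho ^ 2 -> 0 < twist_dy rho y.
Proof.
  intros H1 H2. assert (H3 : 0 < sqrt (rho ^ 2 - y ^ 2)) by (apply sqrt_lt_R0; lra).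
  unfold twist_dy. apply Rdiv_lt_0_compat, Rmult_lt_0_compat; lra.
Qed.

Lemma twist_dy_le (rho y m c0 : R) :
  0 < m -> m <= rho <= 1 -> y ^ 2 <= c0 ^ 2 -> c0 ^ 2 < m ^ 2 ->
  twist_dy rho y <= / ((m ^ 2 - c0 ^ 2) * sqrt (m ^ 2 - c0 ^ 2)).
Proof.
  intros H0 H1 H2 H3. unfold twist_dy.
  assert (D1 : m ^ 2 - c0 ^ 2 <= rho ^ 2 - y ^ 2) by nra.
  assert (S0 : 0 < sqrt (m ^ 2 - c0 ^ 2)) by (apply sqrt_lt_R0; lra).
  assert (S1 : sqrt (m ^ 2 - c0 ^ 2) <= sqrt (rho ^ 2 - y ^ 2)) by (apply sqrt_le_1; lra).
  assert (P0 : 0 < (m ^ 2 - c0 ^ 2) * sqrt (m ^ 2 - c0 ^ 2)) by (apply Rmult_lt_0_compat; lra).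
  assert (P1 : (m ^ 2 - c0 ^ 2) * sqrt (m ^ 2 - c0 ^ 2) <=
               (rho ^ 2 - y ^ 2) * sqrt (rho ^ 2 - y ^ 2)) by (apply Rmult_le_compat; lra).
  unfold Rdiv. apply Rle_trans with (1 * / ((rho ^ 2 - y ^ 2) * sqrt (rho ^ 2 - y ^ 2))).
  - apply Rmult_le_compat_r; [apply Rlt_le, Rinv_0_lt_compat |]; lra.
  - rewrite Rmult_1_l. apply Rinv_le_contravar; auto.
Qed.

Lemma twist_mvt (rho y1 y2 : R) :
  0 < rho -> y1 ^ 2 < rho ^ 2 -> y2 ^ 2 < rho ^ 2 ->
  exists xi, Rmin y1 y2 <= xi <= Rmax y1 y2 /\ twist rho y2 - twist rho y1 = twist_dy rho xi * (y2 - y1).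
Proof.
  intros H1 H2 H3.
  assert (Hb : forall z, Rmin y1 y2 <= z <= Rmax y1 y2 -> z ^ 2 < rho ^ 2).
  { intros z Hz. assert (- rho < y1 < rho) by nra. assert (- rho < y2 < rho) by nra.
    assert (- rho < z < rho) by (unfold Rmin, Rmax in Hz; destruct Rle_dec; lra). nra. }
  destruct (MVT_gen (twist rho) y1 y2 (twist_dy rho)) as [xi [Hxi E]].
  - intros z Hz. apply is_derive_twist; auto. apply Hb. lra.
  - intros z Hz. apply continuity_pt_filterlim, (ex_derive_continuous (V := R_NormedModule)).
    eexists. apply is_derive_twist; auto.
  - exists xi; auto.
Qed.

(* Along a geodesic with Clairaut constant [c = r cos β] and [sin β > 0],
   [ds/dt = sqrt (r^2 - c^2) / r] and [dθ/ds = twist r c]. *)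
Definition rotation_density (r : R -> R) (c s : R) : R := twist (r s) c.

Definition rotation_integral (M : R) (r : R -> R) (c : R) : R :=
  RInt (rotation_density r c) (PI / 2) (M / 2 - PI / 2).

Section ClairautGeodesic.

Variables (M : R) (r : R -> R) (c : R).
Hypothesis Hr : forall x, ex_derive r x.
Hypothesis Hsin : forall s, 0 <= s <= PI / 2 -> r s = sin s.
Hypothesis Hsym : forall s, r (M / 2 - s) = r s.
Hypothesis HM : 2 * PI < M.
Hypothesis Hmin : forall s, 0 < s < M / 2 -> r (M / 4) <= r s.
Hypothesis Hc : 0 < c < r (M / 4).

Lemma c_in_unit : 0 < c < 1.
Proof.
  pose proof PI_RGT_0.
  pose proof (Hmin (PI / 2) ltac:(lra)) as Hr1. rewrite (Hsin (PI / 2)), sin_PI2 in Hr1 by lra. lra.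
Qed.

Lemma asin_c_spec : 0 < asin c < PI / 2 /\ sin (asin c) = c.
Proof.
  pose proof c_in_unit. pose proof (asin_bound_lt c ltac:(lra)) as [H1 H2].
  rewrite sin_asin by lra. repeat split; auto.
  destruct (Rle_lt_dec (asin c) 0) as [Hn | Hp]; auto.
  assert (sin (asin c) <= sin 0) by (apply sin_incr_1; lra).
  rewrite sin_asin, sin_0 in * by lra. lra.
Qed.

Definition in_neck (u : R) : Prop := asin c < u < M / 2 - asin c.

Lemma in_neck_between (x y z : R) :
  in_neck x -> in_neck y -> Rmin x y <= z <= Rmax x y -> in_neck z.
Proof. unfold in_neck, Rmin, Rmax. destruct Rle_dec; lra. Qed.

Lemma in_neck_M4 : in_neck (M / 4).
Proof. destruct asin_c_spec. unfold in_neck. lra. Qed.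

Lemma c_lt_r (u : R) : in_neck u -> c < r u.
Proof.
  intros [H1 H2]. destruct asin_c_spec as [[Ha1 Ha2] Hsa]. pose proof PI_RGT_0.
  destruct (Rle_lt_dec u (PI / 2)); [| destruct (Rle_lt_dec u (M / 2 - PI / 2))].
  - rewrite Hsin, <- Hsa by lra. apply sin_increasing_1; lra.
  - pose proof (Hmin u ltac:(lra)). lra.
  - replace u with (M / 2 - (M / 2 - u)) by ring. rewrite Hsym, Hsin, <- Hsa by lra.
    apply sin_increasing_1; lra.
Qed.

Lemma neck_sqrt_pos (u : R) : in_neck u -> 0 < sqrt (r u ^ 2 - c ^ 2).
Proof. intros H. pose proof (c_lt_r u H). apply sqrt_lt_R0. nra. Qed.

Definition neck_dt (u : R) : R := r u / sqrt (r u ^ 2 - c ^ 2).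

Lemma neck_dt_pos (u : R) : in_neck u -> 0 < neck_dt u.
Proof.
  intros H. pose proof (neck_sqrt_pos u H). pose proof (c_lt_r u H).
  apply Rdiv_lt_0_compat; lra.
Qed.

Lemma neck_dt_continuous (u : R) : in_neck u -> continuous neck_dt u.
Proof.
  intros H. pose proof (neck_sqrt_pos u H). pose proof (c_lt_r u H).
  apply (ex_derive_continuous (V := R_NormedModule)). unfold neck_dt.
  auto_derive. fold_squares. repeat split; auto; nra.
Qed.

Lemma rotation_density_continuous (u : R) : in_neck u -> continuous (rotation_density r c) u.
Proof.
  intros H. pose proof (neck_sqrt_pos u H). pose proof (c_lt_r u H).
  apply (ex_derive_continuous (V := R_NormedModule)). unfold rotation_density, twist.
  auto_derive. fold_squares. repeat split; auto; try nra.
Qed.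

Lemma is_derive_RInt_neck (h : R -> R) (s : R) :
  (forall u, in_neck u -> continuous h u) -> in_neck s ->
  is_derive (fun x => RInt h (M / 4) x) s (h s).
Proof.
  intros Hh Hs. apply (is_derive_RInt h _ (M / 4)); [| now apply Hh].
  destruct Hs as [Hs1 Hs2].
  apply (locally_interval _ s (asin c) (M / 2 - asin c)); simpl; try lra.
  intros y Hy1 Hy2. apply (RInt_correct (V := R_CompleteNormedModule)).
  apply (ex_RInt_continuous (V := R_CompleteNormedModule)). intros z Hz. apply Hh.
  apply (in_neck_between (M / 4) y); auto; [apply in_neck_M4 | split; auto].
Qed.

Definition neck_time (s : R) : R := RInt neck_dt (M / 4) s.
Definition neck_theta (s : R) : R := RInt (rotation_density r c) (M / 4) s.

Lemma is_derive_neck_time (s : R) : in_neck s -> is_derive neck_time s (neck_dt s).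
Proof. intros; apply is_derive_RInt_neck; auto using neck_dt_continuous. Qed.

Lemma is_derive_neck_theta (s : R) :
  in_neck s -> is_derive neck_theta s (rotation_density r c s).
Proof. intros; apply is_derive_RInt_neck; auto using rotation_density_continuous. Qed.

Lemma neck_time_continuous (s : R) : in_neck s -> continuity_pt neck_time s.
Proof.
  intros H. apply continuity_pt_filterlim, (ex_derive_continuous (V := R_NormedModule)).
  eexists. now apply is_derive_neck_time.
Qed.

Lemma neck_time_M4 : neck_time (M / 4) = 0.
Proof. apply (RInt_point (V := R_CompleteNormedModule)). Qed.

Lemma neck_time_lt (x y : R) : in_neck x -> in_neck y -> x < y -> neck_time x < neck_time y.
Proof.
  intros Hx Hy Hxy.
  destruct (MVT_gen neck_time x y neck_dt) as [xi [Hxi E]].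
  - intros z Hz. apply is_derive_neck_time, (in_neck_between x y); auto; lra.
  - intros z Hz. apply neck_time_continuous, (in_neck_between x y); auto.
  - assert (in_neck xi) by (apply (in_neck_between x y); auto).
    pose proof (neck_dt_pos xi H). nra.
Qed.

Lemma neck_time_inj (x y : R) : in_neck x -> in_neck y -> neck_time x = neck_time y -> x = y.
Proof.
  intros Hx Hy E. destruct (Rtotal_order x y) as [L | [Q | G]]; auto.
  - pose proof (neck_time_lt x y Hx Hy L). lra.
  - pose proof (neck_time_lt y x Hy Hx G). lra.
Qed.

Definition neck_a : R := (asin c + PI / 2) / 2.

Lemma neck_a_spec : asin c < neck_a < PI / 2 /\ neck_a < M / 2 - neck_a.
Proof. destruct asin_c_spec as [[H1 H2] _]. unfold neck_a. lra. Qed.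

Lemma in_neck_closed (u : R) : neck_a <= u <= M / 2 - neck_a -> in_neck u.
Proof. destruct neck_a_spec. unfold in_neck. lra. Qed.

Lemma neck_time_le (x y : R) :
  neck_a <= x -> x <= y -> y <= M / 2 - neck_a -> neck_time x <= neck_time y.
Proof.
  intros H1 H2 H3. destruct (Req_dec x y) as [-> | N]; [lra |].
  apply Rlt_le, neck_time_lt; try apply in_neck_closed; lra.
Qed.

(* The inverse of [neck_time] on [[neck_a, M/2 - neck_a]]; an arbitrary value elsewhere. *)
Definition neck_s (y : R) : R :=
  epsilon (inhabits 0) (fun s => neck_a <= s <= M / 2 - neck_a /\ neck_time s = y).

Lemma neck_s_spec (y : R) :
  neck_time neck_a <= y <= neck_time (M / 2 - neck_a) ->
  neck_a <= neck_s y <= M / 2 - neck_a /\ neck_time (neck_s y) = y.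
Proof.
  intros Hy. unfold neck_s. apply epsilon_spec.
  destruct neck_a_spec as [_ Hab].
  destruct (IVT_closed neck_time neck_a (M / 2 - neck_a) y) as [z Hz]; [lra | | | now exists z].
  - intros z Hz. now apply neck_time_continuous, in_neck_closed.
  - rewrite Rmin_left, Rmax_right; lra.
Qed.

Lemma neck_s_time (s : R) : neck_a <= s <= M / 2 - neck_a -> neck_s (neck_time s) = s.
Proof.
  intros Hs. destruct (neck_s_spec (neck_time s)) as [H1 H2].
  - split; apply neck_time_le; lra.
  - apply neck_time_inj; auto; apply in_neck_closed; auto.
Qed.

Lemma neck_s_lt (x y : R) :
  neck_time neck_a <= x -> x < y -> y <= neck_time (M / 2 - neck_a) -> neck_s x < neck_s y.
Proof.
  intros H1 H2 H3.
  destruct (neck_s_spec x ltac:(lra)) as [Hx Ex], (neck_s_spec y ltac:(lra)) as [Hy Ey].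
  destruct (Rlt_le_dec (neck_s x) (neck_s y)) as [L | G]; auto.
  assert (y <= x) by (rewrite <- Ex, <- Ey; apply neck_time_le; lra). lra.
Qed.

Lemma is_derive_neck_s (y : R) :
  neck_time neck_a < y < neck_time (M / 2 - neck_a) -> is_derive neck_s y (/ neck_dt (neck_s y)).
Proof.
  intros Hy. destruct neck_a_spec as [_ Hab].
  assert (Hder : forall a, neck_s (neck_time neck_a) <= a <= neck_s (neck_time (M / 2 - neck_a)) ->
                   derivable_pt neck_time a).
  { intros a Ha. rewrite !neck_s_time in Ha by lra. apply ex_derive_Reals_0.
    eexists. now apply is_derive_neck_time, in_neck_closed. }
  assert (Hcont : continuity_pt neck_s y).
  { apply (Ranalysis5.continuity_pt_recip_interv neck_time neck_s neck_a (M / 2 - neck_a)); auto.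
    - intros x z Hx Hxz Hz. apply neck_time_lt; try apply in_neck_closed; lra.
    - intros x Hx1 Hx2. unfold comp, id. apply neck_s_spec; lra.
    - intros x Hx1 Hx2. apply neck_s_spec; lra.
    - intros a Ha. now apply neck_time_continuous, in_neck_closed. }
  assert (Hrange : neck_s (neck_time neck_a) <= neck_s y <= neck_s (neck_time (M / 2 - neck_a))).
  { rewrite !neck_s_time by lra. apply neck_s_spec; lra. }
  pose proof (Ranalysis5.derivable_pt_lim_recip_interv neck_time neck_s _ _ y Hder Hcont
                ltac:(lra) Hy Hrange) as D.
  destruct (neck_s_spec y ltac:(lra)) as [Hp Ep].
  assert (Dv : derive_pt neck_time (neck_s y) (Hder (neck_s y) Hrange) = neck_dt (neck_s y)).
  { apply derive_pt_eq_0, is_derive_Reals, is_derive_neck_time, in_neck_closed; auto. }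
  rewrite Dv in D.
  assert (neck_dt (neck_s y) <> 0) by (apply Rgt_not_eq, neck_dt_pos, in_neck_closed; auto).
  apply is_derive_Reals. rewrite <- Rdiv_1_l. apply D; auto.
  intros x Hx. unfold comp, id. apply neck_s_spec; lra.
Qed.

Definition neck_beta (s : R) : R := atan (sqrt (r s ^ 2 - c ^ 2) / c).

Lemma sqrt_1_plus_neck_beta (s : R) :
  in_neck s -> sqrt (1 + (sqrt (r s ^ 2 - c ^ 2) / c)²) = r s / c.
Proof.
  intros Hs. pose proof (c_lt_r s Hs). pose proof (neck_sqrt_pos s Hs).
  apply sqrt_eq_of_sq; [apply Rlt_le, Rdiv_lt_0_compat; lra |].
  unfold Rsqr. replace (sqrt (r s ^ 2 - c ^ 2) / c * (sqrt (r s ^ 2 - c ^ 2) / c))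
    with (sqrt (r s ^ 2 - c ^ 2) ^ 2 / c ^ 2) by (field; lra).
  rewrite pow2_sqrt by nra. field. lra.
Qed.

Lemma sin_neck_beta (s : R) : in_neck s -> sin (neck_beta s) = / neck_dt s.
Proof.
  intros Hs. pose proof (c_lt_r s Hs). pose proof (neck_sqrt_pos s Hs).
  unfold neck_beta, neck_dt. rewrite sin_atan, sqrt_1_plus_neck_beta by auto. field. lra.
Qed.

Lemma cos_neck_beta (s : R) : in_neck s -> cos (neck_beta s) = c / r s.
Proof.
  intros Hs. pose proof (c_lt_r s Hs).
  unfold neck_beta. rewrite cos_atan, sqrt_1_plus_neck_beta by auto. field. lra.
Qed.

Lemma is_derive_neck_beta (s : R) :
  in_neck s -> is_derive neck_beta s (c * Derive r s / (r s * sqrt (r s ^ 2 - c ^ 2))).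
Proof.
  intros Hs. pose proof (c_lt_r s Hs). pose proof (neck_sqrt_pos s Hs).
  unfold neck_beta. auto_derive; fold_squares; [repeat split; auto; nra |].
  change (fun x => r x) with r.
  set (q := sqrt (r s ^ 2 - c ^ 2)) in *.
  assert (Hq : q ^ 2 = r s ^ 2 - c ^ 2) by (unfold q; rewrite pow2_sqrt; nra).
  field_simplify_eq; [rewrite Hq; ring | repeat split; nra].
Qed.

Definition tau0 : R := neck_time (PI / 2).
Definition tau1 : R := neck_time (M / 2 - PI / 2).

Lemma neck_time_interior (y : R) :
  tau0 <= y <= tau1 ->
  neck_time neck_a < y < neck_time (M / 2 - neck_a).
Proof.
  intros Hy. destruct neck_a_spec as [[H1 H2] H3]. pose proof PI_RGT_0.
  unfold tau0, tau1 in Hy.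
  assert (neck_time neck_a < neck_time (PI / 2))
    by (apply neck_time_lt; try apply in_neck_closed; lra).
  assert (neck_time (M / 2 - PI / 2) < neck_time (M / 2 - neck_a))
    by (apply neck_time_lt; try apply in_neck_closed; lra).
  lra.
Qed.

Lemma geodesic_on_neck :
  geodesic_on r tau0 tau1
    neck_s (fun y => neck_theta (neck_s y)) (fun y => neck_beta (neck_s y)).
Proof.
  intros y Hy. pose proof (neck_time_interior y Hy) as Hy'.
  pose proof (is_derive_neck_s y Hy') as Ds.
  assert (Hs : in_neck (neck_s y)) by (apply in_neck_closed, neck_s_spec; lra).
  pose proof (c_lt_r _ Hs). pose proof (neck_sqrt_pos _ Hs).
  rewrite sin_neck_beta, cos_neck_beta by auto.
  split; [| split]; auto.
  - pose proof (is_derive_comp _ _ y _ _ (is_derive_neck_beta _ Hs) Ds) as D.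
    unfold scal in D; simpl in D; unfold mult in D; simpl in D.
    unfold neck_dt in D. replace (Derive r _ / _ * _) with
      (/ (r (neck_s y) / sqrt (r (neck_s y) ^ 2 - c ^ 2)) *
        (c * Derive r (neck_s y) / (r (neck_s y) * sqrt (r (neck_s y) ^ 2 - c ^ 2))));
      [exact D | field; lra].
  - pose proof (is_derive_comp _ _ y _ _ (is_derive_neck_theta _ Hs) Ds) as D.
    unfold scal in D; simpl in D; unfold mult in D; simpl in D.
    unfold neck_dt, rotation_density, twist in D. replace (c / _ / _) with
      (/ (r (neck_s y) / sqrt (r (neck_s y) ^ 2 - c ^ 2)) *
        (c / (r (neck_s y) * sqrt (r (neck_s y) ^ 2 - c ^ 2))));
      [exact D | field; lra].
Qed.

Hypothesis HDr : Derive r (PI / 2) = 0.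

Lemma Derive_r_cap (s : R) : 0 < s <= PI / 2 -> Derive r s = cos s.
Proof.
  (* [r = sin] is only known on [[0, PI/2]], so the derivative at [PI/2] comes from [HDr] *)
  intros Hs. destruct (Req_dec s (PI / 2)) as [-> | N]; [now rewrite HDr, cos_PI2 |].
  rewrite (Derive_ext_loc r sin).
  - apply is_derive_unique, is_derive_Reals, derivable_pt_lim_sin.
  - apply (locally_interval _ s 0 (PI / 2)); simpl; try lra.
    intros y H1 H2. apply Hsin; lra.
Qed.

Lemma geodesic_on_cap :
  geodesic_on r (- (PI / 2)) (PI / 2) (cap_s c) (cap_theta c) (cap_beta c).
Proof.
  pose proof c_in_unit as Hc1.
  intros t Ht. assert (Hcos : 0 <= cos t) by (apply cos_ge_0; lra).
  pose proof (cap_s_range c Hc1 t Hcos) as Hs.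
  rewrite Hsin, Derive_r_cap, sin_cap_s, cos_cap_s by lra.
  split; [| split].
  - apply is_derive_cap_s; lra.
  - apply is_derive_cap_beta; lra.
  - apply is_derive_cap_theta; lra.
Qed.

Definition tau2 : R := tau1 + PI.
Definition tau3 : R := tau2 + (tau1 - tau0).
Definition tau4 : R := tau3 + PI.

Lemma neck_quarter_points : neck_a < PI / 2 < M / 4 /\ M / 4 < M / 2 - PI / 2 < M / 2 - neck_a.
Proof. destruct neck_a_spec as [[H1 H2] H3]. pose proof PI_RGT_0. lra. Qed.

Lemma tau_order : tau0 < 0 < tau1 /\ tau1 < tau2 < tau3 /\ tau3 < tau4.
Proof.
  destruct neck_quarter_points as [[H1 H2] [H3 H4]]. pose proof PI_RGT_0.
  assert (tau0 < 0 < tau1).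
  { unfold tau0, tau1. rewrite <- neck_time_M4.
    split; apply neck_time_lt; try apply in_neck_closed; lra. }
  unfold tau4, tau3, tau2. lra.
Qed.

Lemma neck_s_tau0 : neck_s tau0 = PI / 2.
Proof. apply neck_s_time. destruct neck_quarter_points. lra. Qed.

Lemma neck_s_tau1 : neck_s tau1 = M / 2 - PI / 2.
Proof. apply neck_s_time. destruct neck_quarter_points. lra. Qed.

Lemma neck_s_0 : neck_s 0 = M / 4.
Proof. rewrite <- neck_time_M4. apply neck_s_time. destruct neck_quarter_points. lra. Qed.

(* One loop of the model geodesic: it climbs the neck on [[tau0, tau1]], turns in the upper cap
   on [[tau1, tau2]], descends the neck on [[tau2, tau3]] and turns in the lower cap on
   [[tau3, tau4]]; it crosses [P_{M/4}] upwards at time [0]. *)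
Definition loop_S : R -> R :=
  glue tau1 neck_s
    (glue tau2 (fun t => M / 2 - cap_s c (t - (tau1 + PI / 2)))
      (glue tau3 (fun t => neck_s (tau1 + tau2 - t))
        (fun t => cap_s c (t - (tau3 + PI / 2))))).

Definition loop_B : R -> R :=
  glue tau1 (fun t => neck_beta (neck_s t))
    (glue tau2 (fun t => - cap_beta c (t - (tau1 + PI / 2)))
      (glue tau3 (fun t => - neck_beta (neck_s (tau1 + tau2 - t)))
        (fun t => cap_beta c (t - (tau3 + PI / 2))))).

Definition loop_Th : R -> R :=
  glue tau1 (fun t => neck_theta (neck_s t))
    (glue tau2 (fun t => neck_theta (M / 2 - PI / 2) + PI / 2 + cap_theta c (t - (tau1 + PI / 2)))
      (glue tau3 (fun t => 2 * neck_theta (M / 2 - PI / 2) + PI - neck_theta (neck_s (tau1 + tau2 - t)))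
        (fun t => 2 * neck_theta (M / 2 - PI / 2) + PI - neck_theta (PI / 2) + PI / 2
                  + cap_theta c (t - (tau3 + PI / 2))))).

Lemma neck_beta_r1 (s : R) : r s = 1 -> neck_beta s = atan (cap_k c / c).
Proof. intros H. unfold neck_beta, cap_k. now rewrite H, pow1. Qed.

Lemma r_PI2 : r (PI / 2) = 1.
Proof. pose proof PI_RGT_0. rewrite Hsin, sin_PI2; auto; lra. Qed.

Lemma r_M2_PI2 : r (M / 2 - PI / 2) = 1.
Proof. rewrite Hsym. apply r_PI2. Qed.

Lemma geodesic_on_upper_cap :
  geodesic_on r tau1 tau2
    (fun t => M / 2 - cap_s c (t - (tau1 + PI / 2)))
    (fun t => neck_theta (M / 2 - PI / 2) + PI / 2 + cap_theta c (t - (tau1 + PI / 2)))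
    (fun t => - cap_beta c (t - (tau1 + PI / 2))).
Proof.
  apply (geodesic_on_subinterval r (- (PI / 2) + (tau1 + PI / 2)) (PI / 2 + (tau1 + PI / 2)));
    [lra | unfold tau2; lra |].
  exact (geodesic_on_shift r _ _ _ _ _ _ _
           (geodesic_on_mirror r (M / 2) _ _ _ _ _ Hr Hsym geodesic_on_cap)).
Qed.

Lemma geodesic_on_neck_down :
  geodesic_on r tau2 tau3
    (fun t => neck_s (tau1 + tau2 - t))
    (fun t => 2 * neck_theta (M / 2 - PI / 2) + PI - neck_theta (neck_s (tau1 + tau2 - t)))
    (fun t => - neck_beta (neck_s (tau1 + tau2 - t))).
Proof.
  apply (geodesic_on_subinterval r (tau1 + tau2 - tau1) (tau1 + tau2 - tau0));
    [lra | unfold tau3; lra |].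
  exact (geodesic_on_reverse r _ _ _ _ _ _ _ geodesic_on_neck).
Qed.

Lemma geodesic_on_lower_cap :
  geodesic_on r tau3 tau4
    (fun t => cap_s c (t - (tau3 + PI / 2)))
    (fun t => 2 * neck_theta (M / 2 - PI / 2) + PI - neck_theta (PI / 2) + PI / 2
              + cap_theta c (t - (tau3 + PI / 2)))
    (fun t => cap_beta c (t - (tau3 + PI / 2))).
Proof.
  apply (geodesic_on_subinterval r (- (PI / 2) + (tau3 + PI / 2)) (PI / 2 + (tau3 + PI / 2)));
    [lra | unfold tau4; lra |].
  exact (geodesic_on_shift r _ _ _ _ _ _ _ geodesic_on_cap).
Qed.

Lemma geodesic_on_loop : geodesic_on r tau0 tau4 loop_S loop_Th loop_B.
Proof.
  pose proof tau_order as [[O0 O1] [[O2 O3] O4]].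
  assert (E1 : tau1 - (tau1 + PI / 2) = - (PI / 2)) by ring.
  assert (E2 : tau2 - (tau1 + PI / 2) = PI / 2) by (unfold tau2; field).
  assert (E3 : tau1 + tau2 - tau2 = tau1) by ring.
  assert (E4 : tau1 + tau2 - tau3 = tau0) by (unfold tau3; ring).
  assert (E5 : tau3 - (tau3 + PI / 2) = - (PI / 2)) by ring.
  unfold loop_S, loop_B, loop_Th.
  apply (geodesic_on_glue r tau0 tau1 tau4); [exact geodesic_on_neck | | ..].
  apply (geodesic_on_glue r tau1 tau2 tau4); [exact geodesic_on_upper_cap | | ..].
  apply (geodesic_on_glue r tau2 tau3 tau4); [exact geodesic_on_neck_down | exact geodesic_on_lower_cap | ..].
  all: rewrite ?glue_left by lra; cbv beta;
    rewrite ?E1, ?E2, ?E3, ?E4, ?E5, ?neck_s_tau0, ?neck_s_tau1, ?cap_s_PI2, ?cap_s_mPI2,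
      ?cap_theta_PI2, ?cap_theta_mPI2, ?cap_beta_PI2, ?(cap_beta_mPI2 c c_in_unit),
      ?(neck_beta_r1 _ r_PI2), ?(neck_beta_r1 _ r_M2_PI2); field.
Qed.

Definition model_S : R -> R := periodic_extension tau0 tau4 0 loop_S.
Definition model_B : R -> R := periodic_extension tau0 tau4 0 loop_B.
Definition model_Th : R -> R :=
  periodic_extension tau0 tau4 (2 * PI + 2 * rotation_integral M r c) loop_Th.

Lemma neck_theta_increment :
  neck_theta (M / 2 - PI / 2) - neck_theta (PI / 2) = rotation_integral M r c.
Proof.
  destruct neck_quarter_points as [[H1 H2] [H3 H4]].
  assert (Ex : forall a b, in_neck a -> in_neck b -> ex_RInt (rotation_density r c) a b).
  { intros a b Ha Hb. apply (ex_RInt_continuous (V := R_CompleteNormedModule)). intros z Hz.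
    apply rotation_density_continuous, (in_neck_between a b); auto. }
  assert (R2 : in_neck (PI / 2)) by (apply in_neck_closed; lra).
  assert (R4 : in_neck (M / 2 - PI / 2)) by (apply in_neck_closed; lra).
  unfold neck_theta, rotation_integral.
  rewrite <- (RInt_Chasles (V := R_CompleteNormedModule) _ (M / 4) (PI / 2) (M / 2 - PI / 2)
               (Ex _ _ in_neck_M4 R2) (Ex _ _ R2 R4)).
  simpl. unfold plus; simpl. ring.
Qed.

Lemma loop_periodic :
  loop_S tau4 = loop_S tau0 + 0 /\ loop_B tau4 = loop_B tau0 + 0 /\
  loop_Th tau4 = loop_Th tau0 + (2 * PI + 2 * rotation_integral M r c).
Proof.
  pose proof tau_order as [[O0 O1] [[O2 O3] O4]].
  assert (E : tau4 - (tau3 + PI / 2) = PI / 2) by (unfold tau4; field).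
  rewrite <- neck_theta_increment.
  unfold loop_S, loop_B, loop_Th, glue. repeat (destruct Rle_dec; try lra).
  rewrite E, neck_s_tau0, cap_s_PI2, cap_beta_PI2, cap_theta_PI2, (neck_beta_r1 _ r_PI2).
  repeat split; field.
Qed.

Lemma model_geodesic : geodesic_solution r model_S model_Th model_B.
Proof.
  pose proof tau_order as [[O0 O1] [[O2 O3] O4]]. destruct loop_periodic as [ES [EB ETh]].
  apply geodesic_solution_periodic; [lra | exact geodesic_on_loop | lra | lra | exact ETh].
Qed.

Lemma model_eq (t : R) (k : Z) :
  tau0 <= t - IZR k * (tau4 - tau0) <= tau4 ->
  model_S t = loop_S (t - IZR k * (tau4 - tau0)) /\
  model_B t = loop_B (t - IZR k * (tau4 - tau0)) /\
  model_Th t = loop_Th (t - IZR k * (tau4 - tau0)) + IZR k * (2 * PI + 2 * rotation_integral M r c).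
Proof.
  intros Ht. pose proof tau_order as [[O0 O1] [[O2 O3] O4]].
  destruct loop_periodic as [ES [EB ETh]].
  unfold model_S, model_B, model_Th.
  assert (Hlt : tau0 < tau4) by lra.
  rewrite (periodic_extension_eq _ _ _ _ Hlt ES t k Ht), (periodic_extension_eq _ _ _ _ Hlt EB t k Ht),
    (periodic_extension_eq _ _ _ _ Hlt ETh t k Ht).
  repeat split; ring.
Qed.

Lemma model_start : model_S 0 = M / 4 /\ model_B 0 = neck_beta (M / 4).
Proof.
  pose proof tau_order as [[O0 O1] [[O2 O3] O4]].
  destruct (model_eq 0 0) as [ES [EB _]]; [lra |].
  rewrite ES, EB. replace (0 - IZR 0 * (tau4 - tau0)) with 0 by ring.
  unfold loop_S, loop_B. rewrite !glue_left by lra. now rewrite neck_s_0.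
Qed.

Lemma model_return :
  model_S (tau4 - tau0) = M / 4 /\ model_B (tau4 - tau0) = neck_beta (M / 4) /\
  model_Th (tau4 - tau0) - model_Th 0 = 2 * PI + 2 * rotation_integral M r c.
Proof.
  pose proof tau_order as [[O0 O1] [[O2 O3] O4]].
  destruct (model_eq (tau4 - tau0) 1) as [ES [EB ETh]]; [lra |].
  destruct (model_eq 0 0) as [_ [_ ETh0]]; [lra |].
  rewrite ES, EB, ETh, ETh0. replace (tau4 - tau0 - IZR 1 * (tau4 - tau0)) with 0 by ring.
  replace (0 - IZR 0 * (tau4 - tau0)) with 0 by ring.
  unfold loop_S, loop_B. rewrite !glue_left by lra. rewrite neck_s_0.
  repeat split; ring.
Qed.

Lemma neck_s_lt_M4 (y : R) : tau0 <= y < 0 -> neck_s y < M / 4.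
Proof.
  intros Hy. pose proof tau_order as [[O0 O1] _].
  destruct (neck_time_interior y) as [H1 _]; [lra |].
  destruct (neck_time_interior 0) as [_ H2]; [lra |].
  rewrite <- neck_s_0. apply neck_s_lt; lra.
Qed.

Lemma neck_s_gt_M4 (y : R) : 0 < y <= tau1 -> M / 4 < neck_s y.
Proof.
  intros Hy. pose proof tau_order as [[O0 O1] _].
  destruct (neck_time_interior y) as [_ H1]; [lra |].
  destruct (neck_time_interior 0) as [H2 _]; [lra |].
  rewrite <- neck_s_0. apply neck_s_lt; lra.
Qed.

Lemma loop_no_return (t : R) : 0 < t <= tau4 -> ~ (loop_S t = M / 4 /\ 0 < sin (loop_B t)).
Proof.
  intros Ht [Et Hsin_t]. pose proof tau_order as [[O0 O1] [[O2 O3] O4]]. pose proof PI_RGT_0.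
  unfold loop_S, loop_B, glue in *.
  destruct (Rle_dec t tau1); [pose proof (neck_s_gt_M4 t); lra |].
  destruct (Rle_dec t tau2).
  - assert (Hcos : 0 <= cos (t - (tau1 + PI / 2))) by (apply cos_ge_0; unfold tau2 in *; lra).
    pose proof (cap_s_range c c_in_unit _ Hcos). lra.
  - destruct (Rle_dec t tau3).
    + assert (Hs : in_neck (neck_s (tau1 + tau2 - t))).
      { apply in_neck_closed, neck_s_spec.
        enough (neck_time neck_a < tau1 + tau2 - t < neck_time (M / 2 - neck_a)) by lra.
        apply neck_time_interior. unfold tau3 in *. lra. }
      rewrite sin_neg, sin_neck_beta in Hsin_t by auto.
      pose proof (Rinv_0_lt_compat _ (neck_dt_pos _ Hs)). lra.
    + assert (Hcos : 0 <= cos (t - (tau3 + PI / 2))) by (apply cos_ge_0; unfold tau4 in *; lra).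
      pose proof (cap_s_range c c_in_unit _ Hcos). lra.
Qed.

Lemma model_first_return : first_return M model_S model_B (tau4 - tau0).
Proof.
  pose proof tau_order as [[O0 O1] [[O2 O3] O4]].
  destruct model_return as [ES [EB _]].
  assert (HM4 : in_neck (M / 4)) by apply in_neck_M4.
  split; [lra |]. split; [exact ES |]. split.
  { rewrite EB, sin_neck_beta by auto. apply Rinv_0_lt_compat, neck_dt_pos; auto. }
  intros t Ht [Et Hsin_t].
  destruct (Rle_lt_dec t tau4) as [Hle | Hgt].
  - destruct (model_eq t 0) as [ESt [EBt _]]; [lra |].
    replace (t - IZR 0 * (tau4 - tau0)) with t in * by ring.
    apply (loop_no_return t); [lra |]. rewrite <- ESt, <- EBt. auto.
  - destruct (model_eq t 1) as [ESt _]; [lra |].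
    rewrite ESt in Et. unfold loop_S in Et. rewrite glue_left in Et by lra.
    pose proof (neck_s_lt_M4 (t - IZR 1 * (tau4 - tau0))). lra.
Qed.

Lemma clairaut_geodesic_exists :
  exists S Th B T,
    geodesic_solution r S Th B /\ S 0 = M / 4 /\ 0 < sin (B 0) /\ cos (B 0) = c / r (M / 4) /\
    first_return M S B T /\ Th T - Th 0 = 2 * PI + 2 * rotation_integral M r c.
Proof.
  exists model_S, model_Th, model_B, (tau4 - tau0).
  destruct model_start as [ES EB]. destruct model_return as [_ [_ ETh]].
  pose proof in_neck_M4 as HM4.
  split; [exact model_geodesic |]. split; [exact ES |]. split.
  { rewrite EB, sin_neck_beta by auto. apply Rinv_0_lt_compat, neck_dt_pos; auto. }
  split; [rewrite EB; now apply cos_neck_beta |].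
  split; [exact model_first_return | exact ETh].
Qed.

End ClairautGeodesic.

Lemma continuity_pt_lipschitz (g : R -> R) (x0 d K : R) :
  0 < d -> 0 <= K -> (forall x, Rabs (x - x0) < d -> Rabs (g x - g x0) <= K * Rabs (x - x0)) ->
  continuity_pt g x0.
Proof.
  intros Hd HK Hg eps Heps.
  exists (Rmin d (eps / (K + 1))). split; [apply Rmin_pos; [lra | apply Rdiv_lt_0_compat; lra] |].
  intros x [_ Hx]. simpl in *. unfold R_dist in *.
  pose proof (Rmin_l d (eps / (K + 1))). pose proof (Rmin_r d (eps / (K + 1))).
  eapply Rle_lt_trans; [apply Hg; lra |].
  apply Rle_lt_trans with (K * (eps / (K + 1))); [apply Rmult_le_compat_l; lra |].
  apply Rlt_le_trans with ((K + 1) * (eps / (K + 1))); [| right; field; lra].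
  apply Rmult_lt_compat_r; [apply Rdiv_lt_0_compat |]; lra.
Qed.

Section RotationIntegral.

Variables (M : R) (r : R -> R).
Hypothesis Hr : forall x, ex_derive r x.
Hypothesis Hcaps : PI / 2 < M / 2 - PI / 2.
Hypothesis Hbd : forall u, PI / 2 <= u <= M / 2 - PI / 2 -> r (M / 4) <= r u <= 1.
Hypothesis Hrmin : 0 < r (M / 4).

Lemma rotation_density_continuous_neck (y u : R) :
  y ^ 2 < r (M / 4) ^ 2 -> PI / 2 <= u <= M / 2 - PI / 2 -> continuous (rotation_density r y) u.
Proof.
  intros Hy Hu. pose proof (Hbd u Hu) as [B1 B2].
  assert (H3 : 0 < r u ^ 2 - y ^ 2) by nra.
  assert (H4 : 0 < sqrt (r u ^ 2 - y ^ 2)) by (apply sqrt_lt_R0; auto).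
  apply (ex_derive_continuous (V := R_NormedModule)). unfold rotation_density, twist.
  auto_derive. fold_squares. repeat split; auto; try lra.
  apply Rgt_not_eq, Rmult_lt_0_compat; lra.
Qed.

Lemma ex_RInt_rotation_density (y : R) :
  y ^ 2 < r (M / 4) ^ 2 -> ex_RInt (rotation_density r y) (PI / 2) (M / 2 - PI / 2).
Proof.
  intros Hy. apply (ex_RInt_continuous (V := R_CompleteNormedModule)). intros z Hz.
  apply rotation_density_continuous_neck; auto. rewrite Rmin_left, Rmax_right in Hz; lra.
Qed.

Lemma rotation_integral_lt (y1 y2 : R) :
  - r (M / 4) < y1 -> y1 < y2 -> y2 < r (M / 4) ->
  rotation_integral M r y1 < rotation_integral M r y2.
Proof.
  intros H1 H2 H3.
  assert (Q1 : y1 ^ 2 < r (M / 4) ^ 2) by nra.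
  assert (Q2 : y2 ^ 2 < r (M / 4) ^ 2) by nra.
  apply RInt_lt; auto; try (intros u Hu; apply rotation_density_continuous_neck; auto).
  intros u Hu. pose proof (Hbd u ltac:(lra)) as [B1 B2].
  destruct (twist_mvt (r u) y1 y2) as [xi [Hxi E]]; try nra.
  rewrite Rmin_left, Rmax_right in Hxi by lra.
  pose proof (twist_dy_pos (r u) xi ltac:(lra) ltac:(nra)).
  unfold rotation_density. nra.
Qed.

Lemma rotation_integral_opp (y : R) :
  y ^ 2 < r (M / 4) ^ 2 -> rotation_integral M r (- y) = - rotation_integral M r y.
Proof.
  intros Hy. unfold rotation_integral.
  rewrite <- (RInt_opp (V := R_CompleteNormedModule)); [| now apply ex_RInt_rotation_density].
  apply RInt_ext. intros u Hu. unfold rotation_density, twist, opp; simpl.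
  rewrite <- Rdiv_opp_l. f_equal. f_equal. f_equal. ring.
Qed.

Lemma rotation_integral_0 : rotation_integral M r 0 = 0.
Proof.
  unfold rotation_integral.
  rewrite (RInt_ext (V := R_CompleteNormedModule) _ (fun _ => 0)).
  - rewrite (RInt_const (V := R_CompleteNormedModule)). apply Rmult_0_r.
  - intros u Hu. apply Rdiv_0_l.
Qed.

Lemma rotation_integral_lipschitz (x y c0 : R) :
  0 <= c0 < r (M / 4) -> Rabs x <= c0 -> Rabs y <= c0 ->
  Rabs (rotation_integral M r y - rotation_integral M r x) <=
    (M / 2 - PI / 2 - PI / 2) *
    / ((r (M / 4) ^ 2 - c0 ^ 2) * sqrt (r (M / 4) ^ 2 - c0 ^ 2)) * Rabs (y - x).
Proof.
  intros Hc0 Hx Hy.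
  assert (Habs : forall z, Rabs z <= c0 -> z ^ 2 <= c0 ^ 2).
  { intros z Hz. rewrite <- (pow2_abs z). apply pow_incr. split; [apply Rabs_pos | auto]. }
  assert (Qc : c0 ^ 2 < r (M / 4) ^ 2) by nra.
  pose proof (Habs x Hx). pose proof (Habs y Hy).
  unfold rotation_integral.
  rewrite <- (RInt_minus (V := R_CompleteNormedModule)) by (apply ex_RInt_rotation_density; lra).
  rewrite Rmult_assoc. apply abs_RInt_le_const; [lra | |].
  { apply (ex_RInt_minus (V := R_CompleteNormedModule)); apply ex_RInt_rotation_density; lra. }
  intros u Hu. pose proof (Hbd u Hu) as [B1 B2].
  destruct (twist_mvt (r u) x y) as [xi [Hxi E]]; try nra.
  change (Rabs (twist (r u) y - twist (r u) x) <=
    / ((r (M / 4) ^ 2 - c0 ^ 2) * sqrt (r (M / 4) ^ 2 - c0 ^ 2)) * Rabs (y - x)).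
  assert (Hxi2 : xi ^ 2 <= c0 ^ 2).
  { apply Habs. apply Rabs_le_between in Hx, Hy. apply Rabs_le.
    unfold Rmin, Rmax in Hxi. destruct Rle_dec; lra. }
  rewrite E, Rabs_mult, (Rabs_right (twist_dy (r u) xi))
    by (apply Rle_ge, Rlt_le, twist_dy_pos; nra).
  apply Rmult_le_compat_r; [apply Rabs_pos |]. apply twist_dy_le; lra.
Qed.

Lemma rotation_integral_continuous (x0 : R) :
  - r (M / 4) < x0 < r (M / 4) -> continuity_pt (rotation_integral M r) x0.
Proof.
  intros Hx0.
  assert (Hax : Rabs x0 < r (M / 4)) by (apply Rabs_def1; lra).
  set (c0 := (Rabs x0 + r (M / 4)) / 2).
  assert (Hc0 : 0 <= c0 < r (M / 4)) by (pose proof (Rabs_pos x0); unfold c0; lra).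
  assert (Hxc : Rabs x0 < c0) by (unfold c0; lra).
  apply (continuity_pt_lipschitz _ x0 (c0 - Rabs x0)
    ((M / 2 - PI / 2 - PI / 2) * / ((r (M / 4) ^ 2 - c0 ^ 2) * sqrt (r (M / 4) ^ 2 - c0 ^ 2))));
    [lra | |].
  - apply Rmult_le_pos; [lra |]. apply Rlt_le, Rinv_0_lt_compat, Rmult_lt_0_compat; [nra |].
    apply sqrt_lt_R0. nra.
  - intros x Hx. apply rotation_integral_lipschitz; [auto | lra |].
    replace x with ((x - x0) + x0) by ring. eapply Rle_trans; [apply Rabs_triang | lra].
Qed.

End RotationIntegral.

Section ModelSphere.

Variables (M : R) (r z : R -> R).
Hypothesis Hmodel : model_sphere M r z.

Lemma model_sphere_props :
  (forall x, ex_derive r x) /\ (forall s, 0 <= s <= PI / 2 -> r s = sin s) /\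
  (forall s, r (M / 2 - s) = r s) /\ 2 * PI < M /\
  (forall s, 0 < s < M / 2 -> r (M / 4) <= r s <= 1) /\ 0 < r (M / 4) /\
  Derive r (PI / 2) = 0.
Proof.
  destruct Hmodel as [[_ [Hsm _]] [HM [Hsin [Hsym [Hcrit [_ [_ [[Hrm _] Hbd]]]]]]]].
  pose proof PI_RGT_0.
  split; [intros x; exact (Hsm 1%nat x) |].
  split; [exact Hsin |]. split; [intros s; apply Hsym |]. split; [exact HM |].
  split; [exact Hbd |]. split; [exact Hrm |].
  apply (Hcrit (PI / 2)); [lra | now left].
Qed.

Lemma model_caps_disjoint : PI / 2 < M / 2 - PI / 2.
Proof. destruct model_sphere_props as [_ [_ [_ [HM _]]]]. pose proof PI_RGT_0. lra. Qed.

Lemma model_neck_bounds (u : R) : PI / 2 <= u <= M / 2 - PI / 2 -> r (M / 4) <= r u <= 1.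
Proof.
  intros Hu. destruct model_sphere_props as [_ [_ [_ [_ [Hbd _]]]]].
  pose proof PI_RGT_0. apply Hbd. lra.
Qed.

Lemma model_clairaut_geodesic (c : R) :
  0 < c < r (M / 4) ->
  exists S Th B T,
    geodesic_solution r S Th B /\ S 0 = M / 4 /\ 0 < sin (B 0) /\ cos (B 0) = c / r (M / 4) /\
    first_return M S B T /\ Th T - Th 0 = 2 * PI + 2 * rotation_integral M r c.
Proof.
  destruct model_sphere_props as [Hr [Hsin [Hsym [HM [Hbd [_ HDr]]]]]].
  intros Hc. apply (clairaut_geodesic_exists M r c Hr Hsin Hsym HM); auto.
  intros s Hs. apply Hbd, Hs.
Qed.

Definition model_rotation (eta : R) : R :=
  2 * r (M / 4) * rotation_integral M r (- r (M / 4) * eta).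

Lemma model_rotation_lt (a b : R) : -1 < a -> a < b -> b < 1 -> model_rotation b < model_rotation a.
Proof.
  intros Ha Hab Hb. destruct model_sphere_props as [Hr [_ [_ [_ [_ [Hrm _]]]]]].
  assert (rotation_integral M r (- r (M / 4) * b) < rotation_integral M r (- r (M / 4) * a))
    by (apply (rotation_integral_lt M r Hr model_caps_disjoint model_neck_bounds Hrm); nra).
  unfold model_rotation. nra.
Qed.

Lemma model_rotation_continuous (eta : R) : -1 < eta < 1 -> continuity_pt model_rotation eta.
Proof.
  intros Heta. destruct model_sphere_props as [Hr [_ [_ [_ [_ [Hrm _]]]]]].
  apply continuity_pt_scal.
  apply (continuity_pt_comp (fun e => - r (M / 4) * e) (rotation_integral M r)).
  - apply continuity_pt_scal, derivable_continuous_pt, derivable_pt_id.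
  - apply (rotation_integral_continuous M r Hr model_caps_disjoint model_neck_bounds Hrm). nra.
Qed.

Variable f : R -> R.
Hypothesis Hrot : rotation_function M r f.

Lemma rotation_function_mod (eta : R) :
  -1 < eta < 1 -> exists k : Z, f eta = model_rotation eta + IZR k * (2 * PI * r (M / 4)).
Proof.
  intros Heta. destruct Hrot as [_ [Hf0 Hfrot]].
  destruct model_sphere_props as [Hr [_ [_ [_ [_ [Hrm _]]]]]].
  unfold model_rotation.
  destruct (Rtotal_order eta 0) as [Neg | [-> | Pos]].
  - destruct (model_clairaut_geodesic (- r (M / 4) * eta)) as [S [Th [B [T [G [HS0 [HB0 [HcB [Hret HTh]]]]]]]]];
      [nra |].
    destruct (Hfrot eta Heta (Rlt_not_eq _ _ Neg) S Th B G HS0 HB0) with (T := T) as [k Hk]; auto.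
    { rewrite HcB. field. lra. }
    exists (1 - k)%Z. rewrite minus_IZR, HTh in *. lra.
  - exists 0%Z. rewrite Hf0, Rmult_0_r, (rotation_integral_0 M r). ring.
  - destruct (model_clairaut_geodesic (r (M / 4) * eta)) as [S [Th [B [T [G [HS0 [HB0 [HcB [Hret HTh]]]]]]]]];
      [nra |].
    destruct (Hfrot eta Heta (Rgt_not_eq _ _ Pos) S (fun t => - Th t) (fun t => PI - B t)
                (geodesic_solution_reflect r S Th B G) HS0) with (T := T) as [k Hk].
    { now rewrite sin_PI_x. }
    { rewrite Rtrigo_facts.cos_pi_minus, HcB. field. lra. }
    { now apply first_return_reflect. }
    exists (- 1 - k)%Z.
    replace (- r (M / 4) * eta) with (- (r (M / 4) * eta)) by ring.
    rewrite (rotation_integral_opp M r Hr model_caps_disjoint model_neck_bounds Hrm)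
      by (assert (0 < r (M / 4) * eta < r (M / 4)) by nra; nra).
    replace (- Th T - - Th 0) with (- (Th T - Th 0)) in Hk by ring.
    rewrite minus_IZR, HTh in *. lra.
Qed.

Lemma rotation_function_eq (eta : R) : -1 < eta < 1 -> f eta = model_rotation eta.
Proof.
  intros Heta. destruct Hrot as [Hfc [Hf0 _]].
  destruct model_sphere_props as [_ [_ [_ [_ [_ [Hrm _]]]]]]. pose proof PI_RGT_0.
  set (L := 2 * PI * r (M / 4)). assert (HL : 0 < L) by (unfold L; nra).
  set (g := fun e => (f e - model_rotation e) / L).
  assert (Hg_int : forall e, -1 < e < 1 -> exists k : Z, g e = IZR k).
  { intros e He. destruct (rotation_function_mod e He) as [k Hk].
    exists k. unfold g, L. rewrite Hk. field. lra. }
  assert (Hg_cont : forall e, -1 < e < 1 -> continuity_pt g e).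
  { intros e He. apply continuity_pt_div; [| apply continuity_pt_const; now intros ? ? | lra].
    apply continuity_pt_minus; [apply continuity_pt_filterlim, Hfc, He |].
    now apply model_rotation_continuous. }
  assert (Hg0 : g 0 = 0).
  { unfold g, L, model_rotation. rewrite Hf0, Rmult_0_r, (rotation_integral_0 M r). field. lra. }
  assert (Hgeta : g eta = 0).
  { rewrite <- Hg0. destruct (Rle_lt_dec eta 0).
    - apply integer_valued_continuous_const; auto; intros e He; [apply Hg_cont | apply Hg_int]; lra.
    - symmetry. apply integer_valued_continuous_const; [lra | |];
        intros e He; [apply Hg_cont | apply Hg_int]; lra. }
  assert (E : f eta - model_rotation eta = g eta * L) by (unfold g; field; lra).
  rewrite Hgeta, Rmult_0_l in E. lra.
Qed.

End ModelSphere.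

Theorem mainTheorem2 (M : R) (r z f : R -> R) :
  model_sphere M r z ->
  rotation_function M r f ->
  forall a b : R, -1 < a -> a < b -> b < 1 -> f b < f a.
Proof.
  intros Hmodel Hrot a b Ha Hab Hb.
  rewrite (rotation_function_eq M r z Hmodel f Hrot a), (rotation_function_eq M r z Hmodel f Hrot b)
    by lra.
  now apply (model_rotation_lt M r z Hmodel).
Qed.
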